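(* Let $X$ be a closed connected topological manifold, $\pi:P\to X$ a principal circle bundle, and $\gamma:X\to X$ a homeomorphism of order $r$ inducing the identity on $H^1(X;\mathbb{Z})$ and satisfying $\gamma^*P\simeq P$. If $\kappa,\kappa':P\to P$ are two principal bundle automorphisms lifting $\gamma$, then $[\kappa^r]\otimes 1=[(\kappa')^r]\otimes1$ in $H^1(X;\mathbb{Z})\otimes_{\mathbb{Z}}\mathbb{Z}/r$. (Thus $c^r(\gamma,P):=[\kappa^r]\otimes 1$ does not depend on the choice of $\kappa$.)
   Context: $S^1=\mathbb{R}/\mathbb{Z}$ and $\theta\in H^1(S^1;\mathbb{Z})$ is the standard generator; the homotopy class of a map $h:X\to S^1$ is identified with $[h]:=h^*\theta\in H^1(X;\mathbb{Z})$. A gauge transformation $\mu:P\to P$ (bundle automorphism covering the identity) satisfies $\mu(p)=p\cdot h_\mu(\pi(p))$ for a unique continuous $h_\mu:X\to S^1$, and one sets $[\mu]:=[h_\mu]$. If $\kappa$ lifts $\gamma$, then $\kappa^r$ lifts $\gamma^r=\mathrm{Id}_X$ and is a gauge transformation. *)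

From HB Require Import structures.
From mathcomp Require Import all_boot all_order all_algebra.
From mathcomp Require Import all_classical all_reals all_analysis.
From mathcomp Require Import ring.
Set Implicit Arguments. Unset Strict Implicit. Unset Printing Implicit Defensive.
Import Order.TTheory GRing.Theory Num.Theory.
Import numFieldNormedType.Exports.
Local Open Scope classical_set_scope.
Local Open Scope ring_scope.

Section Circle.
Variable R : realType.

(* The circle group S^1 = R/Z, realized (isomorphically, as a topological
   group) as the unit circle in R x R with complex multiplication. *)
Definition circle_set : set (R * R) := [set z | z.1 ^+ 2 + z.2 ^+ 2 = 1].
Definition S1 := set_type circle_set.

Definition cmulR (z w : R * R) : R * R :=
  (z.1 * w.1 - z.2 * w.2, z.1 * w.2 + z.2 * w.1).

Lemma cmulR_circle (z w : S1) : cmulR (val z) (val w) \in circle_set.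
Proof.
case: z => [[a b] Hz]; case: w => [[c d] Hw] /=.
move/set_mem: Hz => Hz; move/set_mem: Hw => Hw.
apply/mem_set; rewrite /circle_set /cmulR /=.
move: Hz Hw; rewrite /circle_set /= => Hz Hw.
have -> : (a * c - b * d) ^+ 2 + (a * d + b * c) ^+ 2
        = (a ^+ 2 + b ^+ 2) * (c ^+ 2 + d ^+ 2) by ring.
by rewrite Hz Hw mulr1.
Qed.

Definition cmul (z w : S1) : S1 := exist _ (cmulR (val z) (val w)) (cmulR_circle z w).

Lemma cone_circle : ((1 : R), (0 : R)) \in circle_set.
Proof. by apply/mem_set; rewrite /circle_set /= expr0n /= addr0 expr1n. Qed.

Definition cone : S1 := exist _ (1, 0) cone_circle.

Lemma cinv_circle (z : S1) : ((val z).1, - (val z).2) \in circle_set.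
Proof.
case: z => [[a b] Hz] /=; move/set_mem: Hz => Hz; apply/mem_set.
by move: Hz; rewrite /circle_set /= sqrrN.
Qed.

Definition cinv (z : S1) : S1 := exist _ ((val z).1, - (val z).2) (cinv_circle z).

Definition cpow (z : S1) (n : nat) : S1 := iter n (cmul z) cone.

End Circle.

Definition homotopic (R : realType) (X Y : topologicalType) (f g : X -> Y) : Prop :=
  exists H : X -> R -> Y,
    {within [set z : X * R | 0 <= z.2 <= 1], continuous (fun z : X * R => H z.1 z.2)} /\
    (forall x, H x 0 = f x) /\ (forall x, H x 1 = g x).

Definition locally_euclidean (R : realType) (X : topologicalType) (n : nat) : Prop :=
  forall x : X, exists U : set X, [/\ open U, U x &
    exists V : set 'rV[R]_n, open V /\
    exists (f : X -> 'rV[R]_n) (g : 'rV[R]_n -> X),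
      [/\ {within U, continuous f}, {within V, continuous g}, f @` U = V,
          (forall y, U y -> g (f y) = y) & (forall v, V v -> f (g v) = v)]].

Definition closed_connected_manifold (R : realType) (X : topologicalType) : Prop :=
  [/\ hausdorff_space X, @second_countable X, compact [set: X], connected [set: X]
    & exists n, locally_euclidean R X n].

Definition homeomorphism (X Y : topologicalType) (f : X -> Y) : Prop :=
  continuous f /\ exists g : Y -> X, [/\ continuous g, cancel f g & cancel g f].

Definition principal_circle_bundle (R : realType) (X P : topologicalType)
  (pi : P -> X) (act : P -> S1 R -> P) : Prop :=
  [/\ continuous pi, (forall x, exists p, pi p = x),
      continuous (fun z : P * S1 R => act z.1 z.2),
      [/\ (forall p, act p (cone R) = p),
         (forall p a b, act (act p a) b = act p (cmul a b)) &
         (forall p a, pi (act p a) = pi p)] &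
      (* local triviality: an S^1-equivariant homeomorphism
         U x S^1 ~ pi^-1(U), (x, a) |-> act (s x) a, with inverse p |-> (pi p, psi p) *)
      forall x : X, exists U : set X, [/\ open U, U x &
        exists (s : X -> P) (psi : P -> S1 R),
          [/\ {within U, continuous s}, (forall y, U y -> pi (s y) = y),
              {within pi @^-1` U, continuous psi},
              (forall p, U (pi p) -> act (s (pi p)) (psi p) = p) &
              (forall y a, U y -> psi (act (s y) a) = a)]]].

Definition bundle_aut_lifting (R : realType) (X P : topologicalType)
  (pi : P -> X) (act : P -> S1 R -> P) (gamma : X -> X) (kappa : P -> P) : Prop :=
  [/\ homeomorphism kappa,
      (forall p a, kappa (act p a) = act (kappa p) a) &
      (forall p, pi (kappa p) = gamma (pi p))].

(* gamma^* P ~ P as principal bundles over X, where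
   gamma^* P = {(x, p) | gamma x = pi p} with action on the second factor. *)
Definition pullback_iso (R : realType) (X P : topologicalType)
  (pi : P -> X) (act : P -> S1 R -> P) (gamma : X -> X) : Prop :=
  let E := [set z : X * P | gamma z.1 = pi z.2] in
  exists (F : X * P -> P) (G : P -> X * P),
    [/\ {within E, continuous F}, continuous G /\ (forall p, E (G p)),
        (forall p, F (G p) = p) /\ (forall z, E z -> G (F z) = z),
        (forall z, E z -> pi (F z) = z.1) &
        (forall z a, E z -> F (z.1, act z.2 a) = act (F z) a)].

From HB Require Import structures.
From mathcomp Require Import all_boot all_order all_algebra.
From mathcomp Require Import all_classical all_reals all_analysis.
From mathcomp Require Import ring.
Import GRing.Theory.
Import numFieldNormedType.Exports.
Local Open Scope classical_set_scope.
Local Open Scope ring_scope.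

(* Two lifts of gamma differ by a gauge transformation: kappa' q = kappa q . phi (pi q)
   for a map phi : X -> S^1, continuous because it is read off in local trivializations.
   Iterating, kappa'^r = kappa^r . prod_(i < r) phi o gamma^i, so h h'^-1 is the
   product of the (phi o gamma^i)^-1.  As gamma acts trivially on [X, S^1] = H^1(X; Z),
   each factor is homotopic to phi^-1, so h h'^-1 is homotopic to (phi^-1)^r. *)

Section CircleGroup.
Variable R : realType.
Implicit Types z w u : S1 R.

Lemma S1_norm z : (val z).1 ^+ 2 + (val z).2 ^+ 2 = 1.
Proof. by case: z => x /= /set_mem. Qed.

Lemma cmulA : associative (@cmul R).
Proof. by move=> z w u; apply: val_inj; rewrite /= /cmulR /=; congr pair; ring. Qed.

Lemma cmulC : commutative (@cmul R).
Proof. by move=> z w; apply: val_inj; rewrite /= /cmulR /=; congr pair; ring. Qed.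

Lemma cmul1z : left_id (cone R) (@cmul R).
Proof. by case=> -[a b] ?; apply: val_inj; rewrite /= /cmulR /=; congr pair; ring. Qed.

Lemma cmulz1 : right_id (cone R) (@cmul R).
Proof. by move=> z; rewrite cmulC cmul1z. Qed.

Lemma cmulVz z : cmul (cinv z) z = cone R.
Proof.
apply: val_inj; rewrite /= /cmulR /= -(S1_norm z); congr pair; ring.
Qed.

Lemma cmulzV z : cmul z (cinv z) = cone R.
Proof. by rewrite cmulC cmulVz. Qed.

Lemma cmulI z : injective (cmul z).
Proof.
by move=> w u e; rewrite -[w]cmul1z -(cmulVz z) -cmulA e cmulA cmulVz cmul1z.
Qed.

Lemma cinvM z w : cinv (cmul z w) = cmul (cinv z) (cinv w).
Proof. by apply: val_inj; rewrite /= /cmulR /=; congr pair; ring. Qed.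

Lemma cinv1 : cinv (cone R) = cone R.
Proof. by apply: val_inj; rewrite /= oppr0. Qed.

HB.instance Definition _ := Monoid.isComLaw.Build (S1 R) (cone R) (@cmul R)
  cmulA cmulC cmul1z.

Lemma cpow_bigcmul z n : cpow z n = \big[@cmul R/cone R]_(i < n) z.
Proof. by rewrite big_const_ord. Qed.

End CircleGroup.

Section CircleContinuity.
Context {R : realType} {T : topologicalType}.
Implicit Types f g : T -> S1 R.

Lemma continuous_S1_coord {f} : continuous f ->
  continuous (fun t => (val (f t)).1) /\ continuous (fun t => (val (f t)).2).
Proof.
move=> cf; have cv t : {for t, continuous (fun t => val (f t))}.
  by apply: continuous_comp (cf t) _; exact: initial_continuous.
by split=> t; apply: continuous_comp (cv t) _; [exact: cvg_fst | exact: cvg_snd].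
Qed.

Lemma continuous_S1 {f} : continuous (fun t => val (f t)) -> continuous f.
Proof. exact: (@continuous_comp_initial (S1 R) T _ val f). Qed.

Lemma cmul_continuous {f g} : continuous f -> continuous g ->
  continuous (fun t => cmul (f t) (g t)).
Proof.
move=> /continuous_S1_coord[f1 f2] /continuous_S1_coord[g1 g2].
apply: continuous_S1 => t.
have re : {for t, continuous (fun t =>
    (val (f t)).1 * (val (g t)).1 - (val (f t)).2 * (val (g t)).2)}.
  exact: (@continuousB R R^o _ _ _ _
    (continuousM (f1 t) (g1 t)) (continuousM (f2 t) (g2 t))).
have im : {for t, continuous (fun t =>
    (val (f t)).1 * (val (g t)).2 + (val (f t)).2 * (val (g t)).1)}.
  exact: (@continuousD R R^o _ _ _ _
    (continuousM (f1 t) (g2 t)) (continuousM (f2 t) (g1 t))).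
exact: cvg_pair re im.
Qed.

Lemma cinv_continuous {f} : continuous f -> continuous (fun t => cinv (f t)).
Proof.
move=> /continuous_S1_coord[f1 f2]; apply: continuous_S1 => t.
exact: cvg_pair (f1 t) (@continuousN R R^o _ _ _ (f2 t)).
Qed.

End CircleContinuity.

Lemma continuous_iter {T : topologicalType} {f : T -> T} n :
  continuous f -> continuous (iter n f).
Proof.
move=> cf; elim: n => [|n IH] x /=; first exact: cvg_id.
exact: continuous_comp (IH x) (cf _).
Qed.

Lemma eq_homotopic {R : realType} {X Y : topologicalType} {f f' g g' : X -> Y} :
  homotopic R f g -> f =1 f' -> g =1 g' -> homotopic R f' g'.
Proof. by move=> + /funext<- /funext<-. Qed.

Section Homotopy.
Context {R : realType} {X : topologicalType}.

Lemma homotopic_refl {Y : topologicalType} {f : X -> Y} :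
  continuous f -> homotopic R f f.
Proof.
move=> cf; exists (fun x _ => f x); split=> //.
by apply: continuous_subspaceT => z; exact: continuous_comp cvg_fst (cf _).
Qed.

Lemma homotopic_cmul {f1 g1 f2 g2 : X -> S1 R} :
  homotopic R f1 g1 -> homotopic R f2 g2 ->
  homotopic R (fun x => cmul (f1 x) (f2 x)) (fun x => cmul (g1 x) (g2 x)).
Proof.
move=> [H1 [c1 [H10 H11]]] [H2 [c2 [H20 H21]]].
exists (fun x t => cmul (H1 x t) (H2 x t)).
by split; [exact: cmul_continuous c1 c2 | split=> x; rewrite ?H10 ?H20 ?H11 ?H21].
Qed.

Lemma homotopic_bigcmul {n} {F G : nat -> X -> S1 R} :
  (forall i, (i < n)%N -> homotopic R (F i) (G i)) ->
  homotopic R (fun x => \big[@cmul R/cone R]_(i < n) F i x)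
              (fun x => \big[@cmul R/cone R]_(i < n) G i x).
Proof.
elim: n => [|n IH] FG.
  apply: eq_homotopic (homotopic_refl (@cst_continuous X _ (cone R))) _ _ => x;
  by rewrite big_ord0.
have FGn := FG n (ltnSn n).
have IHn := IH (fun i lt_in => FG i (leqW lt_in)).
by apply: eq_homotopic (homotopic_cmul IHn FGn) _ _ => x; rewrite big_ord_recr.
Qed.

End Homotopy.

Section GammaInvariantClasses.
Context {R : realType} {X : topologicalType} {gamma : X -> X}.
Hypothesis gamma_cont : continuous gamma.
Hypothesis gamma_invariant :
  forall {f : X -> S1 R}, continuous f -> homotopic R (f \o gamma) f.

Lemma homotopic_comp_iter (g : X -> S1 R) n :
  continuous g -> homotopic R (g \o iter n gamma) g.
Proof.
(* Chaining g o gamma^n ~ ... ~ g would need glued homotopies; instead telescope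
   g o gamma^n = g . prod_(i < n) (f_i o gamma) / f_i and deform all factors to 1 at once. *)
move=> g_cont; pose f i x := g (iter i gamma x).
have f_cont i : continuous (f i).
  by move=> x; exact: continuous_comp (continuous_iter i gamma_cont x) (g_cont _).
have telescope x : g (iter n gamma x) =
    cmul (g x) (\big[@cmul R/cone R]_(i < n) cmul (f i (gamma x)) (cinv (f i x))).
  elim: n => [|n IH]; first by rewrite big_ord0 cmulz1.
  rewrite big_ord_recr cmulA -IH /f -iterSr /=.
  by rewrite cmulC -cmulA cmulVz cmulz1.
have step i :
    homotopic R (fun x => cmul (f i (gamma x)) (cinv (f i x))) (fun=> cone R).
  have f_cont' := cinv_continuous (f_cont i).
  apply: eq_homotopic (homotopic_cmul (gamma_invariant (f_cont i))
    (homotopic_refl f_cont')) _ _ => x //; exact: cmulzV.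
have deform := homotopic_cmul (homotopic_refl g_cont)
  (homotopic_bigcmul (n := n) (fun i _ => step i)).
by apply: (eq_homotopic deform) => x /=; rewrite ?telescope // big1 ?cmulz1.
Qed.

Lemma orbit_product_homotopic_cpow (g : X -> S1 R) n : continuous g ->
  homotopic R (fun x => \big[@cmul R/cone R]_(i < n) g (iter i gamma x))
              (fun x => cpow (g x) n).
Proof.
move=> g_cont; apply: eq_homotopic
  (homotopic_bigcmul (fun i _ => homotopic_comp_iter g i g_cont)) _ _ => x //.
by rewrite cpow_bigcmul.
Qed.

End GammaInvariantClasses.

Section PrincipalBundle.
(* The spaces in [{ pi ...}] avoid the token [{pi] of the quotient notation [{pi a}]. *)
Context {R : realType} {X P : topologicalType} { pi : P -> X } {act : P -> S1 R -> P}.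
Hypothesis bundle : principal_circle_bundle pi act.

Lemma act1 p : act p (cone R) = p.
Proof. by case: bundle => _ _ _ [+ _ _] _; apply. Qed.

Lemma actM p a b : act (act p a) b = act p (cmul a b).
Proof. by case: bundle => _ _ _ [_ + _] _; apply. Qed.

Lemma pi_act p a : pi (act p a) = pi p.
Proof. by case: bundle => _ _ _ [_ _ +] _; apply. Qed.

Lemma chart_actM {U : set X} {s : X -> P} {psi : P -> S1 R} :
    (forall p, U (pi p) -> act (s (pi p)) (psi p) = p) ->
    (forall y a, U y -> psi (act (s y) a) = a) ->
  forall p a, U (pi p) -> psi (act p a) = cmul (psi p) a.
Proof. by move=> s_psi psi_s p a Up; rewrite -{1}(s_psi p Up) actM psi_s. Qed.

Lemma act_inj p : injective (act p).
Proof.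
move=> a b e; case: bundle => _ _ _ _ /(_ (pi p)).
move=> [U [_ Up [s [psi [_ _ _ s_psi psi_s]]]]].
apply: (@cmulI _ (psi p)).
by rewrite -!(chart_actM s_psi psi_s) // e.
Qed.

Lemma act_transitive {p q} : pi p = pi q -> exists c, q = act p c.
Proof.
move=> e; case: bundle => _ _ _ _ /(_ (pi p)).
move=> [U [_ Up [s [psi [_ _ _ s_psi psi_s]]]]].
exists (cmul (cinv (psi p)) (psi q)).
rewrite -[p' in act p' _](s_psi p Up) actM cmulA cmulzV cmul1z e.
by rewrite s_psi // -e.
Qed.

End PrincipalBundle.

Section LiftDifference.
Context {R : realType} {X P : topologicalType} { pi : P -> X } {act : P -> S1 R -> P}.
Context {gamma : X -> X} {kappa kappa' : P -> P}.
Hypothesis bundle : principal_circle_bundle pi act.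
Hypothesis gamma_cont : continuous gamma.
Hypothesis lift : bundle_aut_lifting pi act gamma kappa.
Hypothesis lift' : bundle_aut_lifting pi act gamma kappa'.

Lemma lift_difference_exists :
  exists phi : X -> S1 R, forall q, kappa' q = act (kappa q) (phi (pi q)).
Proof.
have [_ pi_surj _ _ _] := bundle; have [_ kappa_act kappa_pi] := lift.
have [_ kappa'_act kappa'_pi] := lift'.
have fiber_diff x : exists c, exists2 p, pi p = x & kappa' p = act (kappa p) c.
  have [p <-] := pi_surj x.
  have [c kappa'_p] : exists c, kappa' p = act (kappa p) c.
    by apply: (act_transitive bundle); rewrite kappa_pi kappa'_pi.
  by exists c, p.
have [phi phiP] := choice fiber_diff; exists phi => q.
have [p pq kappa'_p] := phiP (pi q).
have [d ->] := act_transitive bundle pq.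
by rewrite kappa_act kappa'_act kappa'_p !(actM bundle) (pi_act bundle) pq cmulC.
Qed.

Lemma lift_difference_continuous {phi : X -> S1 R} :
  (forall q, kappa' q = act (kappa q) (phi (pi q))) -> continuous phi.
Proof.
move=> phiP x; have [pi_cont _ _ _ local_triv] := bundle.
have [U [U_open Ux [s [psi [s_cont pi_s _ _ _]]]]] := local_triv x.
have [U' [U'_open U'gx [s' [psi' [_ _ psi'_cont s'_psi' psi'_s']]]]] :=
  local_triv (gamma x).
pose V := U `&` gamma @^-1` U'.
have V_open : open V by apply: openI => //; exact: open_comp.
have coord_cont k : bundle_aut_lifting pi act gamma k ->
    {within V, continuous (fun y => psi' (k (s y)))}.
  case=> [[k_cont _] _ k_pi].
  apply: (@within_continuous_comp _ _ _ V s (psi' \o k)).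
    move=> _ /set_mem[y [Uy U'gy] <-] /=; apply: continuous_comp (k_cont _) _.
    have pi_U'_open : open (pi @^-1` U') by exact: open_comp.
    move: psi'_cont; rewrite continuous_open_subspace // => /(_ _ (mem_set _)); apply.
    by rewrite /= k_pi pi_s.
  exact: (continuous_subspaceW (@subIsetl _ U _) s_cont).
have phiV :
    {in V, (fun y => cmul (cinv (psi' (kappa (s y)))) (psi' (kappa' (s y)))) =1 phi}.
  move=> y /set_mem[Uy U'gy]; have [_ _ kappa_pi] := lift.
  rewrite phiP (chart_actM bundle s'_psi' psi'_s') ?kappa_pi ?pi_s //.
  by rewrite cmulA cmulVz cmul1z.
have := subspace_eq_continuous phiV
  (cmul_continuous (cinv_continuous (coord_cont _ lift)) (coord_cont _ lift')).
by rewrite continuous_open_subspace // => /(_ x (mem_set _)); apply.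
Qed.

Lemma iter_lift_difference {phi : X -> S1 R} :
    (forall q, kappa' q = act (kappa q) (phi (pi q))) ->
  forall n p, iter n kappa' p =
    act (iter n kappa p) (\big[@cmul R/cone R]_(i < n) phi (iter i gamma (pi p))).
Proof.
move=> phiP n p; have [_ kappa_act _] := lift; have [_ _ kappa'_pi] := lift'.
have pi_iter m : pi (iter m kappa' p) = iter m gamma (pi p).
  by elim: m => //= m IH; rewrite kappa'_pi IH.
elim: n => [|n IH]; first by rewrite big_ord0 (act1 bundle).
by rewrite big_ord_recr /= phiP pi_iter IH kappa_act (actM bundle).
Qed.

End LiftDifference.

Theorem lemma5p1 (R : realType) (X P : topologicalType)
  (pi : P -> X) (act : P -> S1 R -> P) (gamma : X -> X) (r : nat)
  (kappa kappa' : P -> P) (h h' : X -> S1 R) :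
  closed_connected_manifold R X ->
  principal_circle_bundle pi act ->
  homeomorphism gamma ->
  (0 < r)%N ->
  iter r gamma = id ->
  (forall k : nat, (0 < k < r)%N -> iter k gamma <> id) ->
  (forall f : X -> S1 R, continuous f -> homotopic R (f \o gamma) f) ->
  pullback_iso pi act gamma ->
  bundle_aut_lifting pi act gamma kappa ->
  bundle_aut_lifting pi act gamma kappa' ->
  (* h = h_{kappa^r}, h' = h_{kappa'^r}: the continuous maps with
     kappa^r(p) = p . h(pi p) *)
  continuous h -> (forall p, iter r kappa p = act p (h (pi p))) ->
  continuous h' -> (forall p, iter r kappa' p = act p (h' (pi p))) ->
  (* [h] - [h'] lies in r H^1(X;Z), i.e. [h] (x) 1 = [h'] (x) 1 in H^1 (x) Z/r *)
  exists g : X -> S1 R, continuous g /\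
    homotopic R (fun x => cmul (h x) (cinv (h' x))) (fun x => cpow (g x) r).
Proof.
move=> _ bundle [gamma_cont _] _ _ _ gamma_inv _ lift lift' _ hP _ h'P.
have [phi phiP] := lift_difference_exists bundle lift lift'.
have phi_cont := lift_difference_continuous bundle gamma_cont lift lift' phiP.
exists (fun x => cinv (phi x)); split; first exact: cinv_continuous.
have h'E x : h' x = cmul (h x) (\big[@cmul R/cone R]_(i < r) phi (iter i gamma x)).
  have [_ pi_surj _ _ _] := bundle; have [p <-] := pi_surj x.
  apply: (act_inj bundle p).
  by rewrite -h'P (iter_lift_difference bundle lift lift' phiP) hP (actM bundle).
have deform :=
  orbit_product_homotopic_cpow gamma_cont gamma_inv _ r (cinv_continuous phi_cont).
apply: (eq_homotopic deform) => x //.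
by rewrite h'E cinvM cmulA cmulzV cmul1z (big_morph _ (@cinvM R) (cinv1 R)).
Qed.
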